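(* Consider the vanilla decentralized normalized gradient method: each node $i\in[n]$ with local function $f_i:\mathbb{R}^d\to\mathbb{R}$ iterates, in parallel, $\boldsymbol{x}_i^{t+1}=\sum_{r=1}^n w_{ir}\big(\boldsymbol{x}_r^t-\alpha\,\nabla f_r(\boldsymbol{x}_r^t)/\|\nabla f_r(\boldsymbol{x}_r^t)\|\big)$, starting from a common initialization $\boldsymbol{x}_i^0=\boldsymbol{x}_0$. For any even $n$ and any $B\ge 1$, there exist functions $\{f_i\}_{i=1}^n$ satisfying (A1) and (A2), a gradient oracle satisfying (A3), a mixing matrix $\boldsymbol{W}$ satisfying (A4), and an initialization $\boldsymbol{x}_0$, such that the associated parameters $f_*$, $L$, $\sigma$, $\boldsymbol{W}$, $\boldsymbol{x}_0$ do not depend on $B$, and for all $T\ge 1$ and all $\alpha>0$, $$\frac{1}{nT}\sum_{t=0}^{T-1}\sum_{i=1}^n\mathbb{E}\big[\|\nabla f(\boldsymbol{x}_i^t)\|\big]\ge B,$$ where $f=\frac1n\sum_{i=1}^n f_i$.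
   Context: (A1): $f_*:=\inf_{\boldsymbol{x}} f(\boldsymbol{x})>-\infty$. (A2): each $f_i$ is differentiable with $L$-Lipschitz gradient. (A3): the stochastic oracle returns $\boldsymbol{g}_i(\boldsymbol{x},\boldsymbol{\xi}_i^t)$ such that, with $\mathcal{F}_t=\sigma(\{\boldsymbol{\xi}_i^0,\dots,\boldsymbol{\xi}_i^{t-1}:i\in[n]\})$ ($\mathcal{F}_{-1}$ trivial), for every $\mathcal{F}_t$-measurable $\boldsymbol{x}$: $\mathbb{E}[\boldsymbol{g}_i(\boldsymbol{x},\boldsymbol{\xi}_i^t)\mid\mathcal{F}_t]=\nabla f_i(\boldsymbol{x})$, $\mathbb{E}[\|\boldsymbol{g}_i(\boldsymbol{x},\boldsymbol{\xi}_i^t)-\nabla f_i(\boldsymbol{x})\|^p\mid\mathcal{F}_t]\le\sigma^p$ for some $p\in(1,2]$, $\sigma\ge0$, and the samples are independent. (A4): $\boldsymbol{W}=(w_{ir})$ is nonnegative, with $w_{ir}>0$ iff $(i,r)$ is an edge of the communication graph or $i=r$, and is primitive and doubly stochastic. *)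

From HB Require Import structures.
From mathcomp Require Import all_boot all_order all_algebra.
From mathcomp Require Import all_classical all_reals all_analysis.
Set Implicit Arguments. Unset Strict Implicit. Unset Printing Implicit Defensive.
Import Order.TTheory GRing.Theory Num.Theory.
Import numFieldNormedType.Exports.
Local Open Scope ring_scope.

Section Defs.
Variables (R : realType) (n d : nat).

Definition dotv (u v : 'rV[R]_d) : R := \sum_(k < d) u 0 k * v 0 k.
Definition enorm (v : 'rV[R]_d) : R := Num.sqrt (dotv v v).

Definition has_gradient (f : 'rV[R]_d -> R) (g : 'rV[R]_d -> 'rV[R]_d) :=
  forall x, differentiable f x /\ forall v, ('d f x : 'rV[R]_d -> R) v = dotv (g x) v.

Definition favg (fs : 'I_n -> 'rV[R]_d -> R) (x : 'rV[R]_d) : R :=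
  n%:R^-1 * \sum_(i < n) fs i x.
Definition gavg (gs : 'I_n -> 'rV[R]_d -> 'rV[R]_d) (x : 'rV[R]_d) : 'rV[R]_d :=
  n%:R^-1 *: \sum_(i < n) gs i x.

Definition is_inf_value (f : 'rV[R]_d -> R) (fstar : R) :=
  (forall x, fstar <= f x) /\ (forall e : R, 0 < e -> exists x, f x < fstar + e).

Definition lipschitz_grad (L : R) (g : 'rV[R]_d -> 'rV[R]_d) :=
  forall x y, enorm (g x - g y) <= L * enorm (x - y).

(* matrix power without requiring n = m.+1 *)
Definition mxpow (W : 'M[R]_n) (k : nat) : 'M[R]_n := iter k (mulmx W) 1%:M.

Definition mixing_matrix (W : 'M[R]_n) :=
  [/\ (forall i r, 0 <= W i r),
      (exists e : rel 'I_n, symmetric e /\ irreflexive e /\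
         forall i r, (0 < W i r) <-> (e i r \/ i = r)),
      (exists k, forall i r, 0 < mxpow W k i r),
      (forall i, \sum_(r < n) W i r = 1) &
      (forall r, \sum_(i < n) W i r = 1)].

(* Vanilla decentralized normalized gradient method.
   Convention: u / ||u|| with u = 0 is 0 (MathComp's 0^-1 = 0). *)
Fixpoint dngm (W : 'M[R]_n) (gs : 'I_n -> 'rV[R]_d -> 'rV[R]_d) (alpha : R)
  (x0 : 'rV[R]_d) (t : nat) : 'I_n -> 'rV[R]_d :=
  match t with
  | 0 => fun _ => x0
  | t'.+1 =>
      let xt := dngm W gs alpha x0 t' in
      fun i => \sum_(r < n) W i r *:
                 (xt r - (alpha / enorm (gs r (xt r))) *: gs r (xt r))
  end.

End Defs.

(** The counterexample uses the complete-graph averaging matrix [W = J/n] and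
    one-dimensional quadratics [f_i x = (x_j + a_i)^2/2 + c_i] along a fixed
    coordinate [j]. Half of the offsets are [-3B] and half are [B], so at the
    origin the normalized local gradients are [-e_j] and [+e_j] in equal
    numbers and average out: the method never leaves the origin, whatever the
    step size. The constants [c_i] make [f = (x_j + mean a)^2/2] with infimum
    [0], while [|grad f 0| = |mean a| = B]. *)
From HB Require Import structures.
From mathcomp Require Import all_boot all_order all_algebra.
From mathcomp Require Import all_classical all_reals all_analysis.
From mathcomp Require Import ring.
Import Order.TTheory GRing.Theory Num.Theory.
Import numFieldNormedType.Exports.
Set Implicit Arguments. Unset Strict Implicit.
Local Open Scope ring_scope.

Section Euclidean.
Variables (R : realType) (d : nat).

Lemma dotvZl (s : R) (u v : 'rV[R]_d) : dotv (s *: u) v = s * dotv u v.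
Proof.
by rewrite /dotv mulr_sumr; apply: eq_bigr => k _; rewrite mxE mulrA.
Qed.

Lemma dotv_delta (j : 'I_d) (v : 'rV[R]_d) : dotv (delta_mx 0 j) v = v 0 j.
Proof.
rewrite /dotv (bigD1 j) //= big1 ?addr0 => [|k /negbTE kj]; rewrite mxE.
  by rewrite !eqxx mul1r.
by rewrite kj mul0r.
Qed.

Lemma enormZ (s : R) (v : 'rV[R]_d) : enorm (s *: v) = `|s| * enorm v.
Proof.
have dotvZr (u w : 'rV[R]_d) : dotv u (s *: w) = s * dotv u w.
  by rewrite /dotv mulr_sumr; apply: eq_bigr => k _; rewrite mxE mulrCA.
by rewrite /enorm dotvZl dotvZr mulrA -expr2 sqrtrM ?sqr_ge0 // sqrtr_sqr.
Qed.

Lemma enorm_delta (j : 'I_d) : enorm (delta_mx 0 j : 'rV[R]_d) = 1.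
Proof. by rewrite /enorm dotv_delta mxE !eqxx sqrtr1. Qed.

Lemma coord_le_enorm (j : 'I_d) (v : 'rV[R]_d) : `|v 0 j| <= enorm v.
Proof.
have sq_ge0 k : 0 <= v 0 k * v 0 k by rewrite -expr2 sqr_ge0.
rewrite /enorm /dotv (bigD1 j) //= -sqrtr_sqr expr2.
by rewrite ler_sqrt ?addr_ge0 ?sumr_ge0 // lerDl sumr_ge0.
Qed.

End Euclidean.

Section CoordinateQuadratic.
Variables (R : realType) (d : nat) (j : 'I_d).

Definition coordr (x : 'rV[R]_d) : R := x 0 j.

Lemma coordr_is_linear : linear coordr.
Proof. by move=> k x y; rewrite /coordr !mxE. Qed.

HB.instance Definition _ :=
  GRing.isLinear.Build R 'rV[R]_d R _ coordr coordr_is_linear.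

Instance is_diff_coordr (x : 'rV[R]_d) : is_diff x coordr coordr.
Proof.
have coordr_cont : continuous coordr by exact: coord_continuous.
by apply: DiffDef; [exact: linear_differentiable | exact: diff_lin].
Qed.

Definition coord_quad (a c : R) (x : 'rV[R]_d) : R :=
  2^-1 * (x 0 j + a) ^+ 2 + c.

Definition coord_quad_grad (a : R) (x : 'rV[R]_d) : 'rV[R]_d :=
  (x 0 j + a) *: delta_mx 0 j.

Lemma is_diff_coord_quad (a c : R) (x : 'rV[R]_d) :
  is_diff x (coord_quad a c) (fun v => (x 0 j + a) * v 0 j).
Proof.
have -> : coord_quad a c = 2^-1 *: (coordr + cst a) ^+ 2 + cst c.
  by apply/funext.
apply: is_diff_eq; apply/funext => v.
by rewrite !fctE /coordr expr1 !addr0 scalerA mulrA mulVf ?mul1r.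
Qed.

Lemma coord_quad_has_gradient (a c : R) :
  has_gradient (coord_quad a c) (coord_quad_grad a).
Proof.
move=> x; have quad_x := is_diff_coord_quad a c x.
by split=> [|v]; [exact: ex_diff | rewrite diff_val dotvZl dotv_delta].
Qed.

Lemma coord_quad_grad_lipschitz (a : R) : lipschitz_grad 1 (coord_quad_grad a).
Proof.
move=> x y; rewrite -scalerBl enormZ enorm_delta mulr1 mul1r.
have -> : x 0 j + a - (y 0 j + a) = (x - y) 0 j by rewrite !mxE; ring.
exact: coord_le_enorm.
Qed.

Lemma normalized_coord_quad_grad0 (a : R) :
  (enorm (coord_quad_grad a 0))^-1 *: coord_quad_grad a 0 =
  Num.sg a *: delta_mx 0 j.
Proof.
rewrite /coord_quad_grad mxE add0r enormZ enorm_delta mulr1 scalerA.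
case: (eqVneq a 0) => [->|a0]; first by rewrite mulr0 sgr0.
by rewrite {2}[a]numEsg mulrCA mulVf ?mulr1 ?normr_eq0.
Qed.

End CoordinateQuadratic.

Section NormalizedGradientMethod.
Variables (R : realType) (n d : nat) (W : 'M[R]_n).
Variables (gs : 'I_n -> 'rV[R]_d -> 'rV[R]_d) (alpha : R) (x0 : 'rV[R]_d).

Lemma dngm_stationary :
  (forall i, \sum_(r < n) W i r = 1) ->
  (forall i, \sum_(r < n) W i r *: ((enorm (gs r x0))^-1 *: gs r x0) = 0) ->
  forall t i, dngm W gs alpha x0 t i = x0.
Proof.
move=> rowW balanced; elim=> [//|t IH] i /=.
under eq_bigr do rewrite IH scalerBr -scalerA [W i _ *: (alpha *: _)]scalerA
  mulrC -scalerA.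
by rewrite sumrB -scaler_suml rowW scale1r -scaler_sumr balanced scaler0 subr0.
Qed.

End NormalizedGradientMethod.

Section UniformMixing.
Variables (R : realType) (n : nat).
Hypothesis n_gt0 : (0 < n)%N.

Lemma sum_invn : \sum_(r < n) (n%:R : R)^-1 = 1.
Proof.
by rewrite sumr_const card_ord -[LHS]mulr_natr mulVf // pnatr_eq0 -lt0n.
Qed.

Lemma uniform_mixing_matrix : mixing_matrix (const_mx (n%:R : R)^-1 : 'M[R]_n).
Proof.
have invn_gt0 : 0 < (n%:R : R)^-1 by rewrite invr_gt0 ltr0n.
split=> [i r|||i|r].
- by rewrite mxE ltW.
- exists (fun i r => i != r); split; first by move=> i r; rewrite eq_sym.
  split=> [i|i r]; first by rewrite eqxx.
  rewrite mxE; split=> // _.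
  by case: (eqVneq i r) => [->|]; [right|left].
- by exists 1%N => i r; rewrite /mxpow /= mulmx1 mxE.
- by under eq_bigr do rewrite mxE; exact: sum_invn.
- by under eq_bigr do rewrite mxE; exact: sum_invn.
Qed.

End UniformMixing.

Section QuadraticFamily.
Variables (R : realType) (n d : nat) (j : 'I_d) (a : 'I_n -> R).
Hypothesis n_gt0 : (0 < n)%N.

Definition mean : R := n%:R^-1 * \sum_(i < n) a i.

Definition quad_family (i : 'I_n) : 'rV[R]_d -> R :=
  coord_quad j (a i) ((mean ^+ 2 - a i ^+ 2) / 2).

Definition quad_family_grad (i : 'I_n) : 'rV[R]_d -> 'rV[R]_d :=
  coord_quad_grad j (a i).

Let n_neq0 : (n%:R : R) != 0. Proof. by rewrite pnatr_eq0 -lt0n. Qed.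

Lemma sum_mean : \sum_(i < n) a i = n%:R * mean.
Proof. by rewrite /mean mulVKf. Qed.

Lemma favg_quad_family (x : 'rV[R]_d) :
  favg quad_family x = 2^-1 * (x 0 j + mean) ^+ 2.
Proof.
rewrite /favg
  (eq_bigr (fun i => 2^-1 * (x 0 j ^+ 2 + mean ^+ 2) + x 0 j * a i));
  last by move=> i _; rewrite /quad_family /coord_quad; field.
rewrite big_split /= sumr_const card_ord -mulr_sumr sum_mean -mulr_natr.
by field.
Qed.

Lemma quad_family_inf : is_inf_value (favg quad_family) 0.
Proof.
split=> [x|e e_gt0]; first by rewrite favg_quad_family mulr_ge0 ?sqr_ge0.
exists ((- mean) *: delta_mx 0 j).
by rewrite favg_quad_family !mxE !eqxx mulr1 addNr expr0n mulr0 add0r.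
Qed.

Lemma gavg_quad_family (x : 'rV[R]_d) :
  gavg quad_family_grad x = (x 0 j + mean) *: delta_mx 0 j.
Proof.
rewrite /gavg /quad_family_grad /coord_quad_grad -scaler_suml scalerA.
rewrite big_split /= sumr_const card_ord sum_mean -mulr_natr.
by congr (_ *: _); field.
Qed.

Lemma dngm_quad_family_origin (alpha : R) :
  \sum_(i < n) Num.sg (a i) = 0 ->
  forall t i, dngm (const_mx n%:R^-1) quad_family_grad alpha 0 t i = 0.
Proof.
move=> sg_balanced; apply: dngm_stationary => i.
  by under eq_bigr do rewrite mxE; exact: sum_invn.
under eq_bigr do rewrite mxE normalized_coord_quad_grad0.
by rewrite -scaler_sumr -scaler_suml sg_balanced scale0r scaler0.
Qed.

End QuadraticFamily.

Lemma sum_halves (V : nmodType) (m : nat) (F : bool -> V) :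
  \sum_(i < m + m) F (i < m)%N = (F true + F false) *+ m.
Proof.
rewrite big_split_ord /= (eq_bigr (fun=> F true)) => [|i _]; last first.
  by rewrite ltn_ord.
rewrite [X in _ + X](eq_bigr (fun=> F false)) => [|i _]; last first.
  by rewrite ltnNge leq_addr.
by rewrite !sumr_const card_ord mulrnDl.
Qed.

Lemma double_avg_const (R : realType) (n T : nat) (c : R) :
  (0 < n)%N -> (0 < T)%N ->
  (n * T)%:R^-1 * \sum_(t < T) \sum_(i < n) c = c.
Proof.
move=> n_gt0 T_gt0.
rewrite !sumr_const !card_ord -mulrnA -[c *+ _]mulr_natr mulrC mulfK //.
by rewrite pnatr_eq0 muln_eq0 negb_or -!lt0n n_gt0 T_gt0.
Qed.

Theorem claim1 (R : realType) (n d : nat) (hn : (0 < n)%N) (hev : ~~ odd n)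
  (hd : (0 < d)%N) :
  exists (fstar L : R) (W : 'M[R]_n) (x0 : 'rV[R]_d),
    0 <= L /\ mixing_matrix W /\
    forall B : R, 1 <= B ->
      exists (fs : 'I_n -> 'rV[R]_d -> R) (gs : 'I_n -> 'rV[R]_d -> 'rV[R]_d),
        is_inf_value (favg fs) fstar /\
        (forall i, has_gradient (fs i) (gs i)) /\
        (forall i, lipschitz_grad L (gs i)) /\
        forall (T : nat) (alpha : R), (1 <= T)%N -> 0 < alpha ->
          (n * T)%:R^-1 *
            \sum_(t < T) \sum_(i < n) enorm (gavg gs (dngm W gs alpha x0 t i))
          >= B.
Proof.
pose j := Ordinal hd.
exists 0, 1, (const_mx n%:R^-1), 0.
split; first exact: ler01.
split; first exact: uniform_mixing_matrix.
move=> B B_ge1; have B_gt0 : 0 < B by apply: lt_le_trans B_ge1.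
have [m n_eq] : exists m, n = (m + m)%N.
  by exists n./2; rewrite addnn -{1}(odd_double_half n) (negbTE hev).
subst n; pose a (i : 'I_(m + m)) := if (i < m)%N then - (3 * B) else B.
have mean_a : mean a = - B.
  have m_neq0 : (m%:R : R) != 0.
    by rewrite pnatr_eq0 -lt0n -[(0 < m)%N]orbb -addn_gt0.
  rewrite /mean (sum_halves m (fun b => if b then - (3 * B) else B)).
  by rewrite -mulr_natr natrD; field; rewrite -mulr2n mulrn_eq0.
have sg_a : \sum_(i < m + m) Num.sg (a i) = 0.
  rewrite (sum_halves m (fun b => Num.sg (if b then - (3 * B) else B))).
  by rewrite sgrN !gtr0_sg ?mulr_gt0 // addNr mul0rn.
exists (quad_family j a), (quad_family_grad j a).
split; first exact: quad_family_inf.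
split; first by move=> i; exact: coord_quad_has_gradient.
split; first by move=> i; exact: coord_quad_grad_lipschitz.
move=> T alpha T_ge1 _.
under eq_bigr do under eq_bigr do rewrite (dngm_quad_family_origin j hn _ sg_a).
rewrite gavg_quad_family // mxE add0r mean_a enormZ enorm_delta mulr1 normrN.
by rewrite gtr0_norm // double_avg_const.
Qed.
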